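(* Let $C$ be a globularily generated double category and let $\Phi,\Psi$ be horizontally composable 2-morphisms of $C$ (i.e. $t\Phi=s\Psi$). Then the horizontal composite $\Psi\ast\Phi$ is globular if and only if both $\Phi$ and $\Psi$ are globular.
   Context: Double categories are not assumed strict: $C_0$ (objects and vertical morphisms), $C_1$ (horizontal morphisms and 2-morphisms), source and target functors $s,t:C_1\to C_0$, horizontal identity $i$, horizontal composition $\ast$, with unitor and associator components globular. A 2-morphism $\Phi$ is globular if $s\Phi$ and $t\Phi$ are identity vertical morphisms. $C$ is globularily generated if the smallest sub-double category of $C$ containing all objects, vertical morphisms, horizontal morphisms and globular 2-morphisms of $C$ is $C$ itself. *)

(* A category presented "essentially algebraically": a type of objects,
   a type of morphisms, domain/codomain maps, identities and a total
   composition operation that is only constrained on composable pairs.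
   [cmp g f] is "g after f", defined when [cod f = dom g]. *)
Record Cat := {
  ob : Type;
  mor : Type;
  dom : mor -> ob;
  cod : mor -> ob;
  idm : ob -> mor;
  cmp : mor -> mor -> mor;
  dom_idm : forall a, dom (idm a) = a;
  cod_idm : forall a, cod (idm a) = a;
  dom_cmp : forall g f, cod f = dom g -> dom (cmp g f) = dom f;
  cod_cmp : forall g f, cod f = dom g -> cod (cmp g f) = cod g;
  cmp_idl : forall f, cmp (idm (cod f)) f = f;
  cmp_idr : forall f, cmp f (idm (dom f)) = f;
  cmp_assoc : forall h g f, cod f = dom g -> cod g = dom h ->
    cmp h (cmp g f) = cmp (cmp h g) f
}.

Arguments dom {_} _.
Arguments cod {_} _.
Arguments idm {_} _.
Arguments cmp {_} _ _.

(* A (pseudo, i.e. not necessarily strict) double category.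
   C0 : objects and vertical morphisms;
   C1 : horizontal morphisms and 2-morphisms;
   sO/sM, tO/tM : the source and target functors C1 -> C0 (on objects / morphisms);
   iO/iM : the horizontal identity functor C0 -> C1;
   hO/hM : horizontal composition (on horizontal morphisms / 2-morphisms);
     [hO y x] = y * x, defined when [tO x = sO y];
     [hM B A] = B * A, defined when [tM A = sM B];
   lam/rho/alpha (and their inverses): left/right unitors and associator,
   natural, invertible, globular, satisfying the triangle and pentagon laws. *)
Record DoubleCat := {
  C0 : Cat;
  C1 : Cat;
  sO : ob C1 -> ob C0;
  tO : ob C1 -> ob C0;
  sM : mor C1 -> mor C0;
  tM : mor C1 -> mor C0;
  sM_dom : forall A, dom (sM A) = sO (dom A);
  sM_cod : forall A, cod (sM A) = sO (cod A);
  sM_idm : forall x, sM (idm x) = idm (sO x);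
  sM_cmp : forall B A, cod A = dom B -> sM (cmp B A) = cmp (sM B) (sM A);
  tM_dom : forall A, dom (tM A) = tO (dom A);
  tM_cod : forall A, cod (tM A) = tO (cod A);
  tM_idm : forall x, tM (idm x) = idm (tO x);
  tM_cmp : forall B A, cod A = dom B -> tM (cmp B A) = cmp (tM B) (tM A);
  iO : ob C0 -> ob C1;
  iM : mor C0 -> mor C1;
  iM_dom : forall f, dom (iM f) = iO (dom f);
  iM_cod : forall f, cod (iM f) = iO (cod f);
  iM_idm : forall a, iM (idm a) = idm (iO a);
  iM_cmp : forall g f, cod f = dom g -> iM (cmp g f) = cmp (iM g) (iM f);
  sO_iO : forall a, sO (iO a) = a;
  tO_iO : forall a, tO (iO a) = a;
  sM_iM : forall f, sM (iM f) = f;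
  tM_iM : forall f, tM (iM f) = f;
  hO : ob C1 -> ob C1 -> ob C1;
  hM : mor C1 -> mor C1 -> mor C1;
  sO_hO : forall y x, tO x = sO y -> sO (hO y x) = sO x;
  tO_hO : forall y x, tO x = sO y -> tO (hO y x) = tO y;
  sM_hM : forall B A, tM A = sM B -> sM (hM B A) = sM A;
  tM_hM : forall B A, tM A = sM B -> tM (hM B A) = tM B;
  dom_hM : forall B A, tM A = sM B -> dom (hM B A) = hO (dom B) (dom A);
  cod_hM : forall B A, tM A = sM B -> cod (hM B A) = hO (cod B) (cod A);
  hM_idm : forall y x, tO x = sO y -> hM (idm y) (idm x) = idm (hO y x);
  hM_cmp : forall B2 B1 A2 A1,
    cod A1 = dom A2 -> cod B1 = dom B2 -> tM A1 = sM B1 -> tM A2 = sM B2 ->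
    hM (cmp B2 B1) (cmp A2 A1) = cmp (hM B2 A2) (hM B1 A1);
  lam : ob C1 -> mor C1;
  lam_inv : ob C1 -> mor C1;
  dom_lam : forall x, dom (lam x) = hO (iO (tO x)) x;
  cod_lam : forall x, cod (lam x) = x;
  dom_lam_inv : forall x, dom (lam_inv x) = x;
  cod_lam_inv : forall x, cod (lam_inv x) = hO (iO (tO x)) x;
  lam_inv_lam : forall x, cmp (lam_inv x) (lam x) = idm (hO (iO (tO x)) x);
  lam_lam_inv : forall x, cmp (lam x) (lam_inv x) = idm x;
  sM_lam : forall x, sM (lam x) = idm (sO x);
  tM_lam : forall x, tM (lam x) = idm (tO x);
  sM_lam_inv : forall x, sM (lam_inv x) = idm (sO x);
  tM_lam_inv : forall x, tM (lam_inv x) = idm (tO x);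
  lam_nat : forall A,
    cmp (lam (cod A)) (hM (iM (tM A)) A) = cmp A (lam (dom A));
  rho : ob C1 -> mor C1;
  rho_inv : ob C1 -> mor C1;
  dom_rho : forall x, dom (rho x) = hO x (iO (sO x));
  cod_rho : forall x, cod (rho x) = x;
  dom_rho_inv : forall x, dom (rho_inv x) = x;
  cod_rho_inv : forall x, cod (rho_inv x) = hO x (iO (sO x));
  rho_inv_rho : forall x, cmp (rho_inv x) (rho x) = idm (hO x (iO (sO x)));
  rho_rho_inv : forall x, cmp (rho x) (rho_inv x) = idm x;
  sM_rho : forall x, sM (rho x) = idm (sO x);
  tM_rho : forall x, tM (rho x) = idm (tO x);
  sM_rho_inv : forall x, sM (rho_inv x) = idm (sO x);
  tM_rho_inv : forall x, tM (rho_inv x) = idm (tO x);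
  rho_nat : forall A,
    cmp (rho (cod A)) (hM A (iM (sM A))) = cmp A (rho (dom A));
  alpha : ob C1 -> ob C1 -> ob C1 -> mor C1;
  alpha_inv : ob C1 -> ob C1 -> ob C1 -> mor C1;
  dom_alpha : forall z y x, tO x = sO y -> tO y = sO z ->
    dom (alpha z y x) = hO (hO z y) x;
  cod_alpha : forall z y x, tO x = sO y -> tO y = sO z ->
    cod (alpha z y x) = hO z (hO y x);
  dom_alpha_inv : forall z y x, tO x = sO y -> tO y = sO z ->
    dom (alpha_inv z y x) = hO z (hO y x);
  cod_alpha_inv : forall z y x, tO x = sO y -> tO y = sO z ->
    cod (alpha_inv z y x) = hO (hO z y) x;
  alpha_inv_alpha : forall z y x, tO x = sO y -> tO y = sO z ->
    cmp (alpha_inv z y x) (alpha z y x) = idm (hO (hO z y) x);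
  alpha_alpha_inv : forall z y x, tO x = sO y -> tO y = sO z ->
    cmp (alpha z y x) (alpha_inv z y x) = idm (hO z (hO y x));
  sM_alpha : forall z y x, tO x = sO y -> tO y = sO z ->
    sM (alpha z y x) = idm (sO x);
  tM_alpha : forall z y x, tO x = sO y -> tO y = sO z ->
    tM (alpha z y x) = idm (tO z);
  sM_alpha_inv : forall z y x, tO x = sO y -> tO y = sO z ->
    sM (alpha_inv z y x) = idm (sO x);
  tM_alpha_inv : forall z y x, tO x = sO y -> tO y = sO z ->
    tM (alpha_inv z y x) = idm (tO z);
  alpha_nat : forall C B A, tM A = sM B -> tM B = sM C ->
    cmp (alpha (cod C) (cod B) (cod A)) (hM (hM C B) A)
    = cmp (hM C (hM B A)) (alpha (dom C) (dom B) (dom A));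
  triangle : forall y x, tO x = sO y ->
    cmp (hM (idm y) (lam x)) (alpha y (iO (tO x)) x)
    = hM (rho y) (idm x);
  pentagon : forall w z y x, tO x = sO y -> tO y = sO z -> tO z = sO w ->
    cmp (alpha w z (hO y x)) (alpha (hO w z) y x)
    = cmp (hM (idm w) (alpha z y x))
          (cmp (alpha w (hO z y) x) (hM (alpha w z y) (idm x)))
}.

Arguments sO {_} _.  Arguments tO {_} _.
Arguments sM {_} _.  Arguments tM {_} _.
Arguments iO {_} _.  Arguments iM {_} _.
Arguments hO {_} _ _. Arguments hM {_} _ _.
Arguments lam {_} _. Arguments lam_inv {_} _.
Arguments rho {_} _. Arguments rho_inv {_} _.
Arguments alpha {_} _ _ _. Arguments alpha_inv {_} _ _ _.

Definition globular (C : DoubleCat) (A : mor (C1 C)) : Prop :=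
  (exists a, sM A = idm a) /\ (exists b, tM A = idm b).

Definition sub_double_cat (C : DoubleCat)
  (P0 : ob (C0 C) -> Prop) (PV : mor (C0 C) -> Prop)
  (PH : ob (C1 C) -> Prop) (P2 : mor (C1 C) -> Prop) : Prop :=
  (forall f, PV f -> P0 (dom f) /\ P0 (cod f)) /\
  (forall a, P0 a -> PV (idm a)) /\
  (forall g f, PV f -> PV g -> cod f = dom g -> PV (cmp g f)) /\
  (forall A, P2 A -> PH (dom A) /\ PH (cod A)) /\
  (forall x, PH x -> P2 (idm x)) /\
  (forall B A, P2 A -> P2 B -> cod A = dom B -> P2 (cmp B A)) /\
  (forall x, PH x -> P0 (sO x) /\ P0 (tO x)) /\
  (forall A, P2 A -> PV (sM A) /\ PV (tM A)) /\
  (forall a, P0 a -> PH (iO a)) /\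
  (forall f, PV f -> P2 (iM f)) /\
  (forall y x, PH x -> PH y -> tO x = sO y -> PH (hO y x)) /\
  (forall B A, P2 A -> P2 B -> tM A = sM B -> P2 (hM B A)) /\
  (forall x, PH x -> P2 (lam x) /\ P2 (lam_inv x) /\ P2 (rho x) /\ P2 (rho_inv x)) /\
  (forall z y x, PH x -> PH y -> PH z -> tO x = sO y -> tO y = sO z ->
     P2 (alpha z y x) /\ P2 (alpha_inv z y x)).

(* C is globularily generated: the smallest sub-double category containing
   all objects, vertical morphisms, horizontal morphisms and globular
   2-morphisms is C itself; i.e. every sub-double category containing all
   of these contains every 2-morphism. *)
Definition globularily_generated (C : DoubleCat) : Prop :=
  forall P0 PV PH P2,
    sub_double_cat C P0 PV PH P2 ->
    (forall a, P0 a) -> (forall f, PV f) -> (forall x, PH x) ->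
    (forall A, globular C A -> P2 A) ->
    forall A, P2 A.


(* In any double category the pairs (s A, t A) that are either equal or both
   identities are closed under vertical and horizontal composition and
   contain the frames of identities, of horizontal identities i f and of all
   globular 2-morphisms (in particular the unitors and associators).  So in a
   globularily generated double category every 2-morphism has s = t or is
   globular.  If Psi * Phi is globular then s Phi is an identity, hence so is
   t Phi = s Psi, and t Psi is an identity as well. *)

Section EqOrIdms.

Variable K : Cat.

Definition eq_or_idms (f g : mor K) : Prop :=
  f = g \/ exists a b, f = idm a /\ g = idm b.

Lemma cmp_idm_idm (a : ob K) : cmp (idm a) (idm a) = idm a.
Proof.
  pose proof (cmp_idl K (idm a)) as E.
  rewrite cod_idm in E. exact E.
Qed.

Lemma eq_or_idms_idm_l (a : ob K) (g : mor K) :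
  eq_or_idms (idm a) g -> exists b, g = idm b.
Proof.
  intros [<- | [a' [b [_ ->]]]]; eauto.
Qed.

Lemma eq_or_idms_trans (f g h : mor K) :
  eq_or_idms f g -> eq_or_idms g h -> eq_or_idms f h.
Proof.
  intros [<- | [a [b [-> ->]]]] Hgh; [exact Hgh |].
  destruct (eq_or_idms_idm_l b h Hgh) as [c ->].
  right. eauto.
Qed.

Lemma eq_or_idms_cmp (f g f' g' : mor K) :
  eq_or_idms f g -> eq_or_idms f' g' ->
  cod f = dom f' -> cod g = dom g' -> eq_or_idms (cmp f' f) (cmp g' g).
Proof.
  intros [<- | [a [b [-> ->]]]] [<- | [a' [b' [-> ->]]]] Ef Eg.
  - left. reflexivity.
  - rewrite dom_idm in Ef, Eg. rewrite <- Ef, <- Eg. left. reflexivity.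
  - rewrite cod_idm in Ef, Eg. rewrite Ef, Eg. left. reflexivity.
  - rewrite cod_idm, dom_idm in Ef, Eg. subst a b.
    right. exists a', b'. split; apply cmp_idm_idm.
Qed.

End EqOrIdms.

Arguments eq_or_idms {K} _ _.

Lemma globular_eq_or_idms (C : DoubleCat) (A : mor (C1 C)) :
  globular C A -> eq_or_idms (sM A) (tM A).
Proof.
  intros [[a Ha] [b Hb]]. right. eauto.
Qed.

Lemma sub_double_cat_eq_or_idms (C : DoubleCat) :
  sub_double_cat C (fun _ => True) (fun _ => True) (fun _ => True)
    (fun A => eq_or_idms (sM A) (tM A)).
Proof.
  repeat split; try (intros; exact I).
  - intros x _. apply globular_eq_or_idms.
    split; [exists (sO x); apply sM_idm | exists (tO x); apply tM_idm].
  - intros B A HA HB E.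
    rewrite (sM_cmp C B A E), (tM_cmp C B A E).
    apply eq_or_idms_cmp; [exact HA | exact HB | |];
      [rewrite sM_cod, sM_dom | rewrite tM_cod, tM_dom]; congruence.
  - intros f _. left. rewrite sM_iM, tM_iM. reflexivity.
  - intros B A HA HB E.
    rewrite (sM_hM C B A E), (tM_hM C B A E).
    apply (eq_or_idms_trans _ _ (tM A)); [exact HA |].
    rewrite E. exact HB.
  - apply globular_eq_or_idms. split; eexists; [apply sM_lam | apply tM_lam].
  - apply globular_eq_or_idms.
    split; eexists; [apply sM_lam_inv | apply tM_lam_inv].
  - apply globular_eq_or_idms. split; eexists; [apply sM_rho | apply tM_rho].
  - apply globular_eq_or_idms.
    split; eexists; [apply sM_rho_inv | apply tM_rho_inv].
  - apply globular_eq_or_idms.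
    split; eexists; [apply sM_alpha | apply tM_alpha]; assumption.
  - apply globular_eq_or_idms.
    split; eexists; [apply sM_alpha_inv | apply tM_alpha_inv]; assumption.
Qed.

Lemma globularily_generated_eq_or_idms (C : DoubleCat) :
  globularily_generated C -> forall A : mor (C1 C), eq_or_idms (sM A) (tM A).
Proof.
  intros HC.
  apply (HC _ _ _ _ (sub_double_cat_eq_or_idms C));
    auto using globular_eq_or_idms.
Qed.

Theorem corollary4p5 (C : DoubleCat) (HC : globularily_generated C)
  (Phi Psi : mor (C1 C)) (Hcomp : tM Phi = sM Psi) :
  globular C (hM Psi Phi) <-> globular C Phi /\ globular C Psi.
Proof.
  unfold globular.
  rewrite (sM_hM C Psi Phi Hcomp), (tM_hM C Psi Phi Hcomp).
  split.
  - intros [[a Ha] HPsi].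
    pose proof (globularily_generated_eq_or_idms C HC Phi) as HPhi.
    rewrite Ha in HPhi.
    destruct (eq_or_idms_idm_l _ a _ HPhi) as [b Hb].
    repeat split; eauto.
    exists b. rewrite <- Hcomp. exact Hb.
  - intros [[HPhi _] [_ HPsi]]. auto.
Qed.
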